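(* Let $\kappa$ be a regular cardinal and let $\mathsf A$ be a $\kappa$-accessible additive category endowed with a locally $\kappa$-coherent exact structure. Then the full subcategory $\mathsf A_{<\kappa}\subset\mathsf A$ of $\kappa$-presentable objects is closed under extensions in $\mathsf A$; hence $\mathsf A_{<\kappa}$ inherits an exact category structure from $\mathsf A$.
   Context: Exact categories are in the sense of Quillen. An object $S$ is $\kappa$-presentable if $\operatorname{Hom}(S,-)$ preserves $\kappa$-directed colimits; a category is $\kappa$-accessible if it has $\kappa$-directed colimits and a set of $\kappa$-presentable objects of which every object is a $\kappa$-directed colimit. For a $\kappa$-accessible additive category $\mathsf A$, an exact structure on $\mathsf A$ is locally $\kappa$-coherent if its admissible short exact sequences are precisely the $\kappa$-directed colimits (in the category of three-term complexes in $\mathsf A$) of admissible short exact sequences whose three terms are $\kappa$-presentable. *)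

From HB Require Import structures.
From mathcomp Require Import all_boot all_algebra.
Set Implicit Arguments. Unset Strict Implicit. Unset Printing Implicit Defensive.
Import GRing.Theory.
Local Open Scope ring_scope.

(* Cardinals.  A cardinal kappa is represented by a type K of          *)
(* cardinality kappa.                                                  *)

Definition card_lt (X K : Type) : Prop :=
  (exists f : X -> K, injective f) /\ ~ (exists g : K -> X, injective g).

Definition regular_cardinal (K : Type) : Prop :=
  (exists f : nat -> K, injective f) /\
  forall (X : Type) (F : X -> Type),
    card_lt X K -> (forall x, card_lt (F x) K) -> card_lt {x : X & F x} K.

Record CatData := {
  cObj :> Type;
  cHom : cObj -> cObj -> Type;
  cid : forall X, cHom X X;
  ccomp : forall X Y Z, cHom Y Z -> cHom X Y -> cHom X Z }.
Arguments cid {C} X : rename.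
Arguments ccomp {C X Y Z} : rename.

Definition is_iso (C : CatData) (X Y : C) (f : cHom X Y) : Prop :=
  exists g : cHom Y X, ccomp g f = cid X /\ ccomp f g = cid Y.

Record Diagram (C : CatData) := {
  Idx : Type;
  dle : Idx -> Idx -> Prop;
  dob : Idx -> C;
  dmap : forall i j, dle i j -> cHom (dob i) (dob j) }.
Arguments Idx {C}. Arguments dle {C}. Arguments dob {C}. Arguments dmap {C} d {i j}.

Definition is_diagram (C : CatData) (D : Diagram C) : Prop :=
  (forall i, dle D i i) /\
  (forall i j k, dle D i j -> dle D j k -> dle D i k) /\
  (forall i (p : dle D i i), dmap D p = cid (dob D i)) /\
  (forall i j k (p : dle D i j) (q : dle D j k) (r : dle D i k),
      ccomp (dmap D q) (dmap D p) = dmap D r).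

(* kappa-directed: every family of fewer than kappa indices has an upper
   bound (in particular the index set is nonempty). *)
Definition kdirected (K : Type) (C : CatData) (D : Diagram C) : Prop :=
  forall (X : Type) (x : X -> Idx D), card_lt X K ->
    exists u, forall a, dle D (x a) u.

Definition is_cocone (C : CatData) (D : Diagram C) (L : C)
  (iota : forall i, cHom (dob D i) L) : Prop :=
  forall i j (p : dle D i j), ccomp (iota j) (dmap D p) = iota i.

Definition is_colimit (C : CatData) (D : Diagram C) (L : C)
  (iota : forall i, cHom (dob D i) L) : Prop :=
  is_cocone iota /\
  forall (M : C) (mu : forall i, cHom (dob D i) M), is_cocone mu ->
    exists h : cHom L M, (forall i, ccomp h (iota i) = mu i) /\
      forall h' : cHom L M, (forall i, ccomp h' (iota i) = mu i) -> h' = h.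

Definition kdirected_diagram (K : Type) (C : CatData) (D : Diagram C) :=
  is_diagram D /\ kdirected K D.

(* S is kappa-presentable: Hom(S,-) preserves kappa-directed colimits,
   i.e. the canonical map colim_i Hom(S, D i) -> Hom(S, colim D) is a
   bijection (colimit in Set of a directed diagram, written out). *)
Definition presentable (K : Type) (C : CatData) (S : C) : Prop :=
  forall (D : Diagram C) (L : C) (iota : forall i, cHom (dob D i) L),
    kdirected_diagram K D -> is_colimit iota ->
    (forall f : cHom S L, exists i (g : cHom S (dob D i)), f = ccomp (iota i) g) /\
    (forall i i' (g : cHom S (dob D i)) (g' : cHom S (dob D i')),
        ccomp (iota i) g = ccomp (iota i') g' ->
        exists j (p : dle D i j) (p' : dle D i' j),
          ccomp (dmap D p) g = ccomp (dmap D p') g').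

Definition accessible (K : Type) (C : CatData) : Prop :=
  (forall D : Diagram C, kdirected_diagram K D ->
     exists (L : C) (iota : forall i, cHom (dob D i) L), is_colimit iota) /\
  exists (J : Type) (G : J -> C),
    (forall j, presentable K (G j)) /\
    forall X : C, exists (D : Diagram C) (iota : forall i, cHom (dob D i) X),
      kdirected_diagram K D /\
      (forall i, exists j (u : cHom (dob D i) (G j)), is_iso u) /\
      is_colimit iota.

Record PreAddCat := {
  aObj :> Type;
  aHom : aObj -> aObj -> zmodType;
  aid : forall X, aHom X X;
  acomp : forall X Y Z, aHom Y Z -> aHom X Y -> aHom X Z;
  acompA : forall X Y Z W (h : aHom Z W) (g : aHom Y Z) (f : aHom X Y),
      acomp h (acomp g f) = acomp (acomp h g) f;
  acomp1 : forall X Y (f : aHom X Y), acomp f (aid X) = f;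
  acomp1l : forall X Y (f : aHom X Y), acomp (aid Y) f = f;
  acompDl : forall X Y Z (h1 h2 : aHom Y Z) (g : aHom X Y),
      acomp (h1 + h2) g = acomp h1 g + acomp h2 g;
  acompDr : forall X Y Z (h : aHom Y Z) (g1 g2 : aHom X Y),
      acomp h (g1 + g2) = acomp h g1 + acomp h g2 }.
Arguments aid {A} X : rename.
Arguments acomp {A X Y Z} : rename.

Definition catOf (A : PreAddCat) : CatData :=
  {| cObj := aObj A; cHom := fun X Y => (@aHom A X Y : Type);
     cid := @aid A; ccomp := @acomp A |}.
Coercion catOf : PreAddCat >-> CatData.

Definition additive (A : PreAddCat) : Prop :=
  (exists Z : A, forall X : A,
      (forall f : @aHom A X Z, f = 0) /\ (forall f : @aHom A Z X, f = 0)) /\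
  (forall X Y : A, exists (P : A) (i1 : @aHom A X P) (i2 : @aHom A Y P)
      (p1 : @aHom A P X) (p2 : @aHom A P Y),
      acomp p1 i1 = aid X /\ acomp p2 i2 = aid Y /\
      acomp p1 i2 = 0 /\ acomp p2 i1 = 0 /\
      acomp i1 p1 + acomp i2 p2 = aid P).

Record Tri (A : PreAddCat) := {
  t1 : A; t2 : A; t3 : A;
  tf : @aHom A t1 t2; tg : @aHom A t2 t3;
  tz : acomp tg tf = 0 }.
Arguments t1 {A}. Arguments t2 {A}. Arguments t3 {A}.
Arguments tf {A}. Arguments tg {A}. Arguments tz {A}.

Record TriHom (A : PreAddCat) (T T' : Tri A) := {
  m1 : @aHom A (t1 T) (t1 T');
  m2 : @aHom A (t2 T) (t2 T');
  m3 : @aHom A (t3 T) (t3 T');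
  mc1 : acomp (tf T') m1 = acomp m2 (tf T);
  mc2 : acomp (tg T') m2 = acomp m3 (tg T) }.
Arguments m1 {A T T'}. Arguments m2 {A T T'}. Arguments m3 {A T T'}.

Definition TriId (A : PreAddCat) (T : Tri A) : TriHom T T.
Proof.
refine {| m1 := aid (t1 T); m2 := aid (t2 T); m3 := aid (t3 T) |};
  by rewrite acomp1 acomp1l.
Defined.

Definition TriComp (A : PreAddCat) (T T' T'' : Tri A)
  (n : TriHom T' T'') (m : TriHom T T') : TriHom T T''.
Proof.
refine {| m1 := acomp (m1 n) (m1 m); m2 := acomp (m2 n) (m2 m);
          m3 := acomp (m3 n) (m3 m) |}.
- by rewrite acompA (mc1 n) -!acompA (mc1 m).
- by rewrite acompA (mc2 n) -!acompA (mc2 m).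
Defined.

Definition TriCat (A : PreAddCat) : CatData :=
  {| cObj := Tri A; cHom := @TriHom A; cid := @TriId A; ccomp := @TriComp A |}.

Definition mkTri (A : PreAddCat) (X Y Z : A) (f : @aHom A X Y) (g : @aHom A Y Z)
  (h : acomp g f = 0) : Tri A := Build_Tri h.

(* Exact structures (Quillen; axioms as in Buehler, "Exact categories") *)

Definition is_kernel (A : PreAddCat) (X Y Z : A) (f : @aHom A X Y) (g : @aHom A Y Z) :=
  acomp g f = 0 /\
  forall (W : A) (h : @aHom A W Y), acomp g h = 0 ->
    exists u : @aHom A W X, acomp f u = h /\
      forall u' : @aHom A W X, acomp f u' = h -> u' = u.

Definition is_cokernel (A : PreAddCat) (X Y Z : A) (g : @aHom A Y Z) (f : @aHom A X Y) :=
  acomp g f = 0 /\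
  forall (W : A) (h : @aHom A Y W), acomp h f = 0 ->
    exists u : @aHom A Z W, acomp u g = h /\
      forall u' : @aHom A Z W, acomp u' g = h -> u' = u.

Definition is_pushout (A : PreAddCat) (X B X' P : A)
  (i : @aHom A X B) (f : @aHom A X X') (i' : @aHom A X' P) (f' : @aHom A B P) :=
  acomp i' f = acomp f' i /\
  forall (Q : A) (u : @aHom A X' Q) (v : @aHom A B Q), acomp u f = acomp v i ->
    exists w : @aHom A P Q, (acomp w i' = u /\ acomp w f' = v) /\
      forall w' : @aHom A P Q, acomp w' i' = u /\ acomp w' f' = v -> w' = w.

Definition is_pullback (A : PreAddCat) (Y C Y' P : A)
  (p : @aHom A Y C) (f : @aHom A Y' C) (p' : @aHom A P Y') (f' : @aHom A P Y) :=
  acomp f p' = acomp p f' /\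
  forall (Q : A) (u : @aHom A Q Y') (v : @aHom A Q Y), acomp f u = acomp p v ->
    exists w : @aHom A Q P, (acomp p' w = u /\ acomp f' w = v) /\
      forall w' : @aHom A Q P, acomp p' w' = u /\ acomp f' w' = v -> w' = w.

Definition adm_mono (A : PreAddCat) (E : Tri A -> Prop) (X Y : A) (f : @aHom A X Y) :=
  exists (Z : A) (g : @aHom A Y Z) (h : acomp g f = 0), E (mkTri h).

Definition adm_epi (A : PreAddCat) (E : Tri A -> Prop) (Y Z : A) (g : @aHom A Y Z) :=
  exists (X : A) (f : @aHom A X Y) (h : acomp g f = 0), E (mkTri h).

Definition tri_iso (A : PreAddCat) (T T' : Tri A) : Prop :=
  exists m : TriHom T T',
    is_iso (C := catOf A) (m1 m) /\ is_iso (C := catOf A) (m2 m) /\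
    is_iso (C := catOf A) (m3 m).

Definition exact_structure (A : PreAddCat) (E : Tri A -> Prop) : Prop :=
  (forall T, E T -> is_kernel (tf T) (tg T) /\ is_cokernel (tg T) (tf T)) /\
  (forall T T', tri_iso T T' -> E T -> E T') /\
  (forall X : A, adm_mono E (aid X)) /\
  (forall X : A, adm_epi E (aid X)) /\
  (forall (X Y Z : A) (f : @aHom A X Y) (g : @aHom A Y Z),
      adm_mono E f -> adm_mono E g -> adm_mono E (acomp g f)) /\
  (forall (X Y Z : A) (f : @aHom A X Y) (g : @aHom A Y Z),
      adm_epi E f -> adm_epi E g -> adm_epi E (acomp g f)) /\
  (forall (X B X' : A) (i : @aHom A X B) (f : @aHom A X X'), adm_mono E i ->
      exists (P : A) (i' : @aHom A X' P) (f' : @aHom A B P),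
        is_pushout i f i' f' /\ adm_mono E i') /\
  (forall (Y C Y' : A) (p : @aHom A Y C) (f : @aHom A Y' C), adm_epi E p ->
      exists (P : A) (p' : @aHom A P Y') (f' : @aHom A P Y),
        is_pullback p f p' f' /\ adm_epi E p').

Definition locally_coherent (K : Type) (A : PreAddCat) (E : Tri A -> Prop) : Prop :=
  forall T : Tri A,
    E T <->
    exists (D : Diagram (TriCat A)) (iota : forall i, @cHom (TriCat A) (dob D i) T),
      kdirected_diagram K D /\
      (forall i, E (dob D i) /\ presentable K (C := catOf A) (t1 (dob D i)) /\
                 presentable K (C := catOf A) (t2 (dob D i)) /\
                 presentable K (C := catOf A) (t3 (dob D i))) /\
      is_colimit iota.

(* Write T = (X -> Y -> Z) as a kappa-directed colimit of admissible S_i with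
   kappa-presentable terms.  Presentability of X and Z makes id_X and id_Z factor
   through some stage S_k, and presentability of X_k makes the resulting section
   X -> X_k compatible with a transition map S_k -> S_m.  As T is the pushout of a
   pullback of S_k, that transition map extends to a morphism T -> S_m; composed
   with S_m -> T it has identity ends, so its middle component is invertible and
   Y is a retract of the kappa-presentable Y_m. *)

From mathcomp Require Import all_boot all_algebra.
Set Implicit Arguments. Unset Strict Implicit. Unset Printing Implicit Defensive.
Local Open Scope ring_scope.

Section PreAdditive.
Import GRing.Theory.
Variable A : PreAddCat.
Implicit Types X Y Z W : A.

Lemma acomp0r X Y Z (h : aHom Y Z) : acomp h (0 : aHom X Y) = 0.
Proof. by apply: (@addrI _ (acomp h 0)); rewrite -acompDr !addr0. Qed.

Lemma acomp0l X Y Z (g : aHom X Y) : acomp (0 : aHom Y Z) g = 0.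
Proof. by apply: (@addrI _ (acomp 0 g)); rewrite -acompDl !addr0. Qed.

Lemma acompNr X Y Z (h : aHom Y Z) (g : aHom X Y) : acomp h (- g) = - acomp h g.
Proof. by apply/eqP; rewrite -addr_eq0 -acompDr addNr acomp0r. Qed.

Lemma acompNl X Y Z (h : aHom Y Z) (g : aHom X Y) : acomp (- h) g = - acomp h g.
Proof. by apply/eqP; rewrite -addr_eq0 -acompDl addNr acomp0l. Qed.

Lemma acompBr X Y Z (h : aHom Y Z) (g1 g2 : aHom X Y) :
  acomp h (g1 - g2) = acomp h g1 - acomp h g2.
Proof. by rewrite acompDr acompNr. Qed.

Lemma acompBl X Y Z (h1 h2 : aHom Y Z) (g : aHom X Y) :
  acomp (h1 - h2) g = acomp h1 g - acomp h2 g.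
Proof. by rewrite acompDl acompNl. Qed.

Lemma kernel_monic X Y Z (f : aHom X Y) (g : aHom Y Z) : is_kernel f g ->
  forall W (u v : aHom W X), acomp f u = acomp f v -> u = v.
Proof.
move=> [gf0 kerf] W u v fuv.
have [|w [_ w_uniq]] := kerf W (acomp f u); first by rewrite acompA gf0 acomp0l.
by rewrite (w_uniq u erefl) (w_uniq v (esym fuv)).
Qed.

Lemma cokernel_epic X Y Z (g : aHom Y Z) (f : aHom X Y) : is_cokernel g f ->
  forall W (u v : aHom Z W), acomp u g = acomp v g -> u = v.
Proof.
move=> [gf0 cokg] W u v ugv.
have [|w [_ w_uniq]] := cokg W (acomp u g); first by rewrite -acompA gf0 acomp0r.
by rewrite (w_uniq u erefl) (w_uniq v (esym ugv)).
Qed.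

Lemma trihom_eq (T T' : Tri A) (h h' : TriHom T T') :
  m1 h = m1 h' -> m2 h = m2 h' -> m3 h = m3 h' -> h = h'.
Proof.
case: h h' => [a b c e1 e2] [a' b' c' e1' e2'] /= ea eb ec; subst a' b' c'.
by congr Build_TriHom; apply: eq_irrelevance.
Qed.

Lemma acomp_idB_idD Y (e : aHom Y Y) :
  acomp e e = 0 -> acomp (aid Y - e) (aid Y + e) = aid Y.
Proof.
by move=> ee0; rewrite acompDr !acompBl !acomp1l !acomp1 ee0 subr0 addrNK.
Qed.

(* Short five lemma for an endomorphism with identity ends: its middle component
   is 1 + d with d factoring through the cokernel, so d^2 = 0. *)
Lemma trihom_id_ends_iso (T : Tri A) (h : TriHom T T) :
  is_cokernel (tg T) (tf T) -> m1 h = aid (t1 T) -> m3 h = aid (t3 T) ->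
  is_iso (C := catOf A) (m2 h).
Proof.
move=> cokT h1 h3; set d := m2 h - aid (t2 T).
have d_f : acomp d (tf T) = 0 by rewrite acompBl -(mc1 h) h1 acomp1 acomp1l subrr.
have [eps [eps_g _]] := proj2 cokT _ d d_f.
have g_eps : acomp (tg T) eps = 0.
  apply: (cokernel_epic cokT); rewrite acomp0l -acompA eps_g acompBr (mc2 h) h3.
  by rewrite acomp1 acomp1l subrr.
have dd0 : acomp d d = 0 by rewrite -eps_g -acompA (acompA (tg T)) g_eps acomp0l acomp0r.
have h2E : m2 h = aid (t2 T) + d by rewrite addrC subrK.
rewrite h2E; clearbody d; exists (aid (t2 T) - d); split=> /=; first exact: acomp_idB_idD.
by rewrite acompDl !acompBr !acomp1 !acomp1l dd0 subr0 addrNK.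
Qed.

End PreAdditive.

Lemma presentable_retract (K : Type) (A : PreAddCat) (P Y : A)
    (e : aHom Y P) (r : aHom P Y) :
  acomp r e = aid Y -> presentable K (C := catOf A) P -> presentable K (C := catOf A) Y.
Proof.
move=> re1 presP D L iota Ddir iota_colim.
have [factor_ex factor_eq] := presP D L iota Ddir iota_colim; split.
- move=> f /=; have [i [g fr]] := factor_ex (acomp f r).
  by exists i, (acomp g e); rewrite /= acompA -[acomp _ g]fr -acompA re1 acomp1.
- move=> i i' g g' /= gg'.
  have [|j [p [p' rgg']]] := factor_eq i i' (acomp g r) (acomp g' r).
    by rewrite /= !acompA gg'.
  exists j, p, p'; move/(congr1 (fun x => acomp x e)): rgg' => /=.
  by rewrite -!acompA re1 !acomp1.
Qed.

Lemma card_lt_bool (K : Type) : (exists f : nat -> K, injective f) -> card_lt bool K.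
Proof.
move=> [f finj]; split; first by exists (f \o nat_of_bool) => [[] []] /finj.
move=> [g ginj].
have /leq_card : injective (fun i : 'I_3 => g (f i)) by move=> i j /ginj /finj /val_inj.
by rewrite card_ord card_bool.
Qed.

Lemma kdirected_ub2 (K : Type) (C : CatData) (D : Diagram C) :
  (exists f : nat -> K, injective f) -> kdirected K D ->
  forall i j, exists u, dle D i u /\ dle D j u.
Proof.
move=> infK Ddir i j.
have [u iju] := Ddir bool (fun b => if b then i else j) (card_lt_bool infK).
by exists u; split; [exact: (iju true) | exact: (iju false)].
Qed.

Section ComponentColimit.
Variable A : PreAddCat.
Variables (ob : Tri A -> A) (mp : forall T T' : Tri A, TriHom T T' -> aHom (ob T) (ob T')).
Hypothesis mp_id : forall T, mp (TriId T) = aid (ob T).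
Hypothesis mp_comp : forall (T T' T'' : Tri A) (n : TriHom T' T'') (m : TriHom T T'),
  mp (TriComp n m) = acomp (mp n) (mp m).

Definition component_diagram (D : Diagram (TriCat A)) : Diagram (catOf A) :=
  @Build_Diagram (catOf A) (Idx D) (dle D) (fun i => ob (dob D i))
    (fun i j p => mp (dmap D p)).

Lemma component_kdirected (K : Type) (D : Diagram (TriCat A)) :
  kdirected_diagram K D -> kdirected_diagram K (component_diagram D).
Proof.
move=> [[Drefl [Dtrans [Did Dcomp]]] Ddir]; split=> //; do 3!split=> //.
- by move=> i p /=; rewrite (Did i p) mp_id.
- by move=> i j k p q r /=; rewrite -(Dcomp i j k p q r) mp_comp.
Qed.

(* Hom(ob -, M) is a natural retract of the representable Hom(-, R M), so [ob]
   carries colimits of complexes to colimits in A. *)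
Variables (R : A -> Tri A) (lift : forall (T : Tri A) M, aHom (ob T) M -> TriHom T (R M))
  (proj : forall (T : Tri A) M, TriHom T (R M) -> aHom (ob T) M).
Hypothesis proj_lift : forall T M (u : aHom (ob T) M), proj (lift u) = u.
Hypothesis proj_comp : forall (T T' : Tri A) M (h : TriHom T' (R M)) (k : TriHom T T'),
  proj (TriComp h k) = acomp (proj h) (mp k).
Hypothesis lift_comp : forall (T T' : Tri A) M (u : aHom (ob T') M) (k : TriHom T T'),
  TriComp (lift u) k = lift (acomp u (mp k)).

Lemma component_colimit (D : Diagram (TriCat A)) (L : Tri A)
    (iota : forall i, TriHom (dob D i) L) :
  is_colimit (C := TriCat A) iota ->
  is_colimit (D := component_diagram D) (fun i => mp (iota i)).
Proof.
move=> [iota_cocone iota_univ]; split.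
  by move=> i j p /=; rewrite -mp_comp -[in RHS](iota_cocone i j p).
move=> M mu mu_cocone.
have lift_cocone : is_cocone (C := TriCat A) (fun i => lift (mu i)).
  by move=> i j p /=; rewrite lift_comp -[in RHS](mu_cocone i j p).
have [h [h_iota h_uniq]] := iota_univ (R M) _ lift_cocone.
exists (proj h); split=> [i | h' h'_iota] /=.
  by rewrite -proj_comp; move: (h_iota i) => /= ->; rewrite proj_lift.
rewrite -(h_uniq (lift h')) ?proj_lift // => i /=.
by rewrite lift_comp; move: (h'_iota i) => /= ->.
Qed.

End ComponentColimit.

Section OuterComponents.
Variable A : PreAddCat.

Definition diagram1 : Diagram (TriCat A) -> Diagram (catOf A) :=
  @component_diagram A (fun T : Tri A => t1 T) (fun T T' (h : TriHom T T') => m1 h).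

Definition diagram3 : Diagram (TriCat A) -> Diagram (catOf A) :=
  @component_diagram A (fun T : Tri A => t3 T) (fun T T' (h : TriHom T T') => m3 h).

Lemma cocone1 (D : Diagram (TriCat A)) (L : Tri A) (iota : forall i, TriHom (dob D i) L) :
  is_cocone (C := TriCat A) iota ->
  forall i j (p : dle D i j), acomp (m1 (iota j)) (m1 (dmap D p)) = m1 (iota i).
Proof. by move=> iota_cocone i j p; rewrite -(iota_cocone i j p). Qed.

Lemma cocone3 (D : Diagram (TriCat A)) (L : Tri A) (iota : forall i, TriHom (dob D i) L) :
  is_cocone (C := TriCat A) iota ->
  forall i j (p : dle D i j), acomp (m3 (iota j)) (m3 (dmap D p)) = m3 (iota i).
Proof. by move=> iota_cocone i j p; rewrite -(iota_cocone i j p). Qed.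

Lemma kdirected1 (K : Type) (D : Diagram (TriCat A)) :
  kdirected_diagram K D -> kdirected_diagram K (diagram1 D).
Proof. exact: component_kdirected. Qed.

Lemma kdirected3 (K : Type) (D : Diagram (TriCat A)) :
  kdirected_diagram K D -> kdirected_diagram K (diagram3 D).
Proof. exact: component_kdirected. Qed.

Definition tri_zero_maps (M : A) : Tri A := @mkTri A M M M 0 0 (@acomp0l A M M M 0).

Definition tri_id_right (M : A) : Tri A :=
  @mkTri A M M M 0 (aid M) (@acomp0r A M M M (aid M)).

Definition lift1 (T : Tri A) (M : A) (u : aHom (t1 T) M) : TriHom T (tri_zero_maps M).
Proof. by refine (@Build_TriHom A T (tri_zero_maps M) u 0 0 _ _); rewrite /= !acomp0l. Defined.

Definition lift3 (T : Tri A) (M : A) (u : aHom (t3 T) M) : TriHom T (tri_id_right M).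
Proof.
refine (@Build_TriHom A T (tri_id_right M) 0 (acomp u (tg T)) u _ _) => /=.
- by rewrite acomp0l -acompA tz acomp0r.
- by rewrite acomp1l.
Defined.

Lemma colimit1 (D : Diagram (TriCat A)) (L : Tri A) (iota : forall i, TriHom (dob D i) L) :
  is_colimit (C := TriCat A) iota ->
  is_colimit (D := diagram1 D) (fun i => m1 (iota i)).
Proof.
apply: (@component_colimit A _ _ _ tri_zero_maps lift1 (fun T M h => m1 h)) => //.
by move=> T T' M u k; apply: trihom_eq; rewrite /= ?acomp0l.
Qed.

Lemma colimit3 (D : Diagram (TriCat A)) (L : Tri A) (iota : forall i, TriHom (dob D i) L) :
  is_colimit (C := TriCat A) iota ->
  is_colimit (D := diagram3 D) (fun i => m3 (iota i)).
Proof.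
apply: (@component_colimit A _ _ _ tri_id_right lift3 (fun T M h => m3 h)) => //.
move=> T T' M u k; apply: trihom_eq; rewrite /= ?acomp0l //.
by rewrite -acompA (mc2 k) acompA.
Qed.

End OuterComponents.

Section ExactStructure.
Import GRing.Theory.
Variables (A : PreAddCat) (E : Tri A -> Prop).
Hypothesis exactE : exact_structure E.

Lemma adm_kernel (T : Tri A) : E T -> is_kernel (tf T) (tg T).
Proof. by move=> ET; case: exactE => kc _; case: (kc T ET). Qed.

Lemma adm_cokernel (T : Tri A) : E T -> is_cokernel (tg T) (tf T).
Proof. by move=> ET; case: exactE => kc _; case: (kc T ET). Qed.

Lemma adm_epi_pullback (Y C Y' : A) (p : aHom Y C) (f : aHom Y' C) : adm_epi E p ->
  exists (P : A) (p' : aHom P Y') (f' : aHom P Y), is_pullback p f p' f' /\ adm_epi E p'.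
Proof. by case: exactE => _ [_ [_ [_ [_ [_ [_ pb]]]]]]; apply: pb. Qed.

Lemma adm_epi_tg (T : Tri A) : E T -> adm_epi E (tg T).
Proof. by case: T => X Y Z f g gf0 ET; exists X, f, gf0. Qed.

(* T is the pushout along m1 iota of the pullback of S along t, which is why a
   morphism out of S whose first component factors through m1 iota extends to T.
   Concretely, T2 is the cokernel of k0 : K0 -> Q, where Q = T2 x_{S3} S2. *)
Lemma extend_trihom (S T S'' : Tri A) (iota : TriHom S T) (t : aHom (t3 T) (t3 S))
    (mu : TriHom S S'') (sigma : aHom (t1 T) (t1 S'')) :
  E S -> E T -> acomp (m3 iota) t = aid (t3 T) -> acomp sigma (m1 iota) = m1 mu ->
  exists psi : TriHom T S'', m1 psi = sigma /\ m3 psi = acomp (m3 mu) t.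
Proof.
move=> ES ET ct1 sigma_a.
have [kerT kerS] := (adm_kernel ET, adm_kernel ES).
have [Q [r1 [r2 [[r12 pbQ] [K0 [k0 [r1k0 EQ]]]]]]] :=
  adm_epi_pullback (acomp t (tg T)) (adm_epi_tg ES).
have cok_r1 := adm_cokernel EQ; simpl in r1k0, cok_r1.
have [|pi [f_pi _]] := proj2 kerT Q (r1 - acomp (m2 iota) r2).
  by rewrite acompBr acompA (mc2 iota) -acompA -r12 !acompA ct1 acomp1l subrr.
have [|w [f_w _]] := proj2 kerS K0 (acomp r2 k0).
  by rewrite acompA -r12 -acompA r1k0 acomp0r.
have pi_k0 : acomp pi k0 = - acomp (m1 iota) w.
  apply: (kernel_monic kerT); rewrite acompNr acompA f_pi acompBl r1k0 sub0r.
  by rewrite acompA (mc1 iota) -!acompA f_w.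
set Theta := acomp (m2 mu) r2 + acomp (tf S'') (acomp sigma pi).
have [|psi [psi_r1 _]] := proj2 cok_r1 _ Theta.
  rewrite acompDl -!acompA -f_w pi_k0 !acompNr acompA -(mc1 mu) -sigma_a -!acompA.
  exact: subrr.
have [|j [[r1_j r2_j] _]] := pbQ _ (tf T) 0; first by rewrite -acompA tz !acomp0r.
have pi_j : acomp pi j = aid (t1 T).
  apply: (kernel_monic kerT).
  by rewrite acomp1 acompA f_pi acompBl -acompA r2_j acomp0r subr0.
have psi_f : acomp psi (tf T) = acomp (tf S'') sigma.
  by rewrite -r1_j acompA psi_r1 acompDl -!acompA r2_j pi_j acomp0r add0r acomp1.
have psi_g : acomp (tg S'') psi = acomp (acomp (m3 mu) t) (tg T).
  apply: (cokernel_epic cok_r1); rewrite -acompA psi_r1 acompDr !acompA (mc2 mu).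
  by rewrite (tz S'') !acomp0l addr0 -acompA -r12 !acompA.
by exists (Build_TriHom (esym psi_f) psi_g).
Qed.

End ExactStructure.

Theorem proposition1p3 (K : Type) (A : PreAddCat) (E : Tri A -> Prop) :
  regular_cardinal K ->
  additive A ->
  accessible K A ->
  exact_structure E ->
  locally_coherent K E ->
  forall T : Tri A, E T ->
    presentable K (C := catOf A) (t1 T) ->
    presentable K (C := catOf A) (t3 T) ->
    presentable K (C := catOf A) (t2 T).
Proof.
move=> [infK _] _ _ exactE cohE T ET presX presZ.
have [D [iota [Ddir [DE colim]]]] := proj1 (cohE T) ET.
have [dir1 colim1] := (kdirected1 Ddir, colimit1 colim).
have [dir3 colim3] := (kdirected3 Ddir, colimit3 colim).
have [i1 [s a_s]] := (presX _ _ _ dir1 colim1).1 (aid (t1 T)).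
have [i3 [t c_t]] := (presZ _ _ _ dir3 colim3).1 (aid (t3 T)).
have [k [le1 le3]] := kdirected_ub2 infK Ddir.2 i1 i3.
set s' := acomp (m1 (dmap D le1)) s; set t' := acomp (m3 (dmap D le3)) t.
have [co1 co3] := (cocone1 colim.1, cocone3 colim.1).
have a_s' : acomp (m1 (iota k)) s' = aid (t1 T) by rewrite acompA co1.
have c_t' : acomp (m3 (iota k)) t' = aid (t3 T) by rewrite acompA co3.
have [ESk [presXk _]] := DE k.
have [m [p [p' s'_eventually]]] : exists m (p p' : dle D k m),
    acomp (m1 (dmap D p)) (acomp s' (m1 (iota k))) = acomp (m1 (dmap D p')) (aid _).
  by apply: (presXk _ _ _ dir1 colim1).2; rewrite /= acompA a_s' acomp1l acomp1.
set sigma := acomp (m1 (dmap D p)) s'.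
have sigma_a : acomp sigma (m1 (iota k)) = m1 (dmap D p').
  by rewrite -acompA s'_eventually acomp1.
have [psi [psi1 psi3]] := extend_trihom exactE ESk ET c_t' sigma_a.
have [r [r_b _]] : is_iso (C := catOf A) (m2 (TriComp (iota m) psi)).
  apply: trihom_id_ends_iso (adm_cokernel exactE ET) _ _ => /=.
  - by rewrite psi1 acompA co1.
  - by rewrite psi3 acompA co3.
apply: (presentable_retract (e := m2 psi) (r := acomp r (m2 (iota m)))).
  by rewrite -acompA.
by case: (DE m) => _ [_ []].
Qed.
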